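(* Let $C\subset\mathbb{R}^n$ be a nonempty compact path-wise connected set and let $f:C\to\mathbb{R}$ be a continuous function satisfying the Lipschitz condition, with Lipschitz constant $$M_0=\sup\Big\{\frac{|f(y)-f(x)|}{|y-x|}\ :\ x,y\in C,\ x\neq y\Big\}<\infty .$$ Let $v=\min_{x\in C}f(x)$ be the global minimum value of $f$ on $C$. Let $C=C_1\supset C_2\supset\cdots$ be the sequence of sets produced by the granular sieving (GrS) procedure with constant $M_0$ (described in the context), where the maximal diameters $\delta_k$ of the partition pieces satisfy $\delta_k\to 0$ as $k\to\infty$. Then $$\tilde C:=\bigcap_{k=1}^{\infty}C_k\neq\emptyset\qquad\text{and}\qquad f(\tilde C)=\{v\},$$ where $f(A)=\{f(a): a\in A\}$ for $A\subset C$.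
   Context: GrS procedure with constant $M>0$ (here $M=M_0$): set $C_1=C$. Given a compact set $C_k\subset C$, choose a finite partition $\mathbb{N}_k=\{C^{(k)}_l: l=1,\dots,l_k\}$ of $C_k$, i.e. $C_k=\bigcup_{l=1}^{l_k}C^{(k)}_l$, such that: each $C^{(k)}_l$ is compact (boundaries of different pieces may overlap); the partitions become finer, in the sense that each piece $C^{(k+1)}_{l'}$ of $\mathbb{N}_{k+1}$ is either entirely contained in a piece $C^{(k)}_l$ of $\mathbb{N}_k$ or has empty intersection with the interior of $C^{(k)}_l$; and in each piece a representative point (''center'') $x^{(k)}_l\in C^{(k)}_l$ is chosen. Let $\delta_k$ be the maximal diameter of the pieces $C^{(k)}_l$, $l=1,\dots,l_k$ (diameter = maximal distance between two points of the set). Put $v_k=\min\{f(x^{(k)}_l): l=1,\dots,l_k\}$. A piece $C^{(k)}_l$ is called good if $f(x^{(k)}_l)\le v_k+\delta_k M$ and bad if $f(x^{(k)}_l)> v_k+\delta_k M$. Define $C_{k+1}$ to be the union of all good pieces of $\mathbb{N}_k$, and continue inductively. *)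

From HB Require Import structures.
From mathcomp Require Import all_boot all_order all_algebra.
From mathcomp Require Import all_classical all_reals all_analysis.
Set Implicit Arguments. Unset Strict Implicit. Unset Printing Implicit Defensive.
Import Order.TTheory GRing.Theory Num.Theory.
Import numFieldNormedType.Exports.
Local Open Scope classical_set_scope.
Local Open Scope ring_scope.

(* Points of R^n are row vectors 'rV[R]_n (product topology = Euclidean topology). *)

Definition edist (R : realType) (n : nat) (x y : 'rV[R]_n) : R :=
  Num.sqrt (\sum_(i < n) (x ord0 i - y ord0 i) ^+ 2).

Definition diam (R : realType) (n : nat) (A : set 'rV[R]_n) : R :=
  sup [set d | exists a b, A a /\ A b /\ d = edist a b].

Definition path_connected_set (R : realType) (n : nat) (A : set 'rV[R]_n) : Prop :=
  forall x y, A x -> A y ->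
    exists g : R -> 'rV[R]_n,
      {within `[0, 1], continuous g} /\ g 0 = x /\ g 1 = y /\ g @` `[0, 1] `<=` A.

Definition lip_quotients (R : realType) (n : nat) (C : set 'rV[R]_n)
  (f : 'rV[R]_n -> R) : set R :=
  [set q | exists x y, C x /\ C y /\ x <> y /\ q = `|f y - f x| / edist x y].

(* Data of the GrS procedure: at step k, pieces P k l for l < lk k,
   with centers c k l; Cs k is the current compact set C_k
   (indices start at 0: Cs 0 = C is the paper's C_1). *)

Definition grs_delta (R : realType) (n : nat) (lk : nat -> nat)
  (P : nat -> nat -> set 'rV[R]_n) (k : nat) : R :=
  \big[Num.max/0]_(l < lk k) diam (P k l).

Definition grs_v (R : realType) (n : nat) (f : 'rV[R]_n -> R) (lk : nat -> nat)
  (c : nat -> nat -> 'rV[R]_n) (k : nat) : R :=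
  \big[Num.min/f (c k 0%N)]_(l < lk k) f (c k l).

Definition GrS_sequence (R : realType) (n : nat) (C : set 'rV[R]_n)
  (f : 'rV[R]_n -> R) (M : R) (Cs : nat -> set 'rV[R]_n) (lk : nat -> nat)
  (P : nat -> nat -> set 'rV[R]_n) (c : nat -> nat -> 'rV[R]_n) : Prop :=
  Cs 0%N = C /\
      (forall k, Cs k = \bigcup_(l in [set l | (l < lk k)%N]) P k l) /\
      (forall k l, (l < lk k)%N -> compact (P k l)) /\
      (forall k l, (l < lk k)%N -> P k l (c k l)) /\
      (forall k l' l, (l' < lk k.+1)%N -> (l < lk k)%N ->
         P k.+1 l' `<=` P k l \/ P k.+1 l' `&` interior (P k l) = set0) /\
      (forall k, Cs k.+1 = \bigcup_(l in [set l | (l < lk k)%N /\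
                     f (c k l) <= grs_v f lk c k + grs_delta lk P k * M]) P k l).

From Pilot Require Import Defs.
From HB Require Import structures.
From mathcomp Require Import all_boot all_order all_algebra.
From mathcomp Require Import all_classical all_reals all_analysis.
From mathcomp Require Import lra.
Import Order.TTheory GRing.Theory Num.Theory.
Import numFieldNormedType.Exports.
Local Open Scope classical_set_scope.
Local Open Scope ring_scope.

(* A global minimiser x0 is never sieved out: if x0 lies in a piece with
   centre c, then f c <= f x0 + M delta_k <= v_k + M delta_k, so the piece is
   good.  Conversely a point of a good piece has value at most
   v_k + 2 M delta_k, and v_k is at most f x0 + M delta_k (use the centre of
   the piece containing x0).  Hence f <= v + 3 M delta_k on C_(k+1), and
   letting delta_k -> 0 pins f to v on the intersection, which contains x0. *)

Section EuclideanDistance.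
Context {R : realType} {n : nat}.
Implicit Types (x y : 'rV[R]_n) (A : set 'rV[R]_n).

Lemma edistxx x : Defs.edist x x = 0.
Proof.
rewrite /Defs.edist (eq_bigr (fun=> 0)) ?big1 ?sqrtr0 // => i _.
by rewrite subrr expr0n.
Qed.

Lemma edist_ge0 x y : 0 <= Defs.edist x y.
Proof. exact: sqrtr_ge0. Qed.

Lemma edist_gt0 {x y} : x <> y -> 0 < Defs.edist x y.
Proof.
move=> xy; rewrite /Defs.edist sqrtr_gt0.
have [i xiyi] : exists i, x ord0 i != y ord0 i.
  apply: contrapT => /forallNP eq_xy; apply: xy; apply/rowP => i.
  by apply/eqP/negbNE/negP/eq_xy.
rewrite (bigD1 i) //= ltr_pwDl ?exprn_even_gt0 ?subr_eq0 ?sumr_ge0 // => j _.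
exact: sqr_ge0.
Qed.

Lemma coord_le_norm x i : `|x ord0 i| <= `|x|.
Proof.
have -> : `|x| = mx_norm x by [].
rewrite mx_normrE.
exact: (le_bigmax _ (fun ij : 'I_1 * 'I_n => `|x ij.1 ij.2|) (ord0, i)).
Qed.

Lemma edist_le_norm_sqr x y : Defs.edist x y <= n%:R * (`|x| + `|y|) ^+ 2 + 1.
Proof.
rewrite /Defs.edist; set S := \sum_(i < n) _.
have S_le : S <= n%:R * (`|x| + `|y|) ^+ 2.
  have -> : n%:R * (`|x| + `|y|) ^+ 2 = \sum_(i < n) (`|x| + `|y|) ^+ 2.
    by rewrite sumr_const card_ord mulr_natl.
  apply: ler_sum => i _.
  rewrite -real_normK ?num_real // lerXn2r ?nnegrE ?addr_ge0 //.
  by rewrite (le_trans (ler_normB _ _)) // lerD ?coord_le_norm.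
suff : Num.sqrt S <= S + 1 by lra.
have S_ge0 : 0 <= S by apply: sumr_ge0 => i _; exact: sqr_ge0.
rewrite -(@ger0_norm _ (S + 1)) -?sqrtr_sqr; last lra.
apply: ler_wsqrtr; nra.
Qed.

Lemma has_ubound_edist A :
  compact A -> has_ubound [set d | exists a b, A a /\ A b /\ d = Defs.edist a b].
Proof.
move=> /compact_bounded [r [_ /(_ (`|r| + 1))]].
move=> /(_ (ltr_pwDr ltr01 (ler_norm r))) A_bnd.
exists (n%:R * (`|r| + 1 + (`|r| + 1)) ^+ 2 + 1) => _ [a [b [Aa [Ab ->]]]].
apply: (le_trans (edist_le_norm_sqr a b)); rewrite lerD2r ler_wpM2l //.
by rewrite lerXn2r ?nnegrE ?addr_ge0 // lerD ?A_bnd.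
Qed.

Lemma edist_le_diam {A a b} : compact A -> A a -> A b -> Defs.edist a b <= diam A.
Proof.
by move=> cA Aa Ab; apply: ub_le_sup; [exact: has_ubound_edist | exists a, b].
Qed.

End EuclideanDistance.

Section LipschitzConstant.
Context {R : realType} {n : nat} {C : set 'rV[R]_n} {f : 'rV[R]_n -> R}.
Hypothesis lip_bnd : has_ubound (lip_quotients C f).

Lemma sup_lip_quotients_ge0 : 0 <= sup (lip_quotients C f).
Proof.
have [[q Cq]|no_q] := pselect (lip_quotients C f !=set0).
  apply: le_trans (ub_le_sup lip_bnd Cq).
  by case: Cq => [a [b [_ [_ [_ ->]]]]]; rewrite divr_ge0 ?edist_ge0.
suff -> : lip_quotients C f = set0 by rewrite sup0.
by apply/seteqP; split=> // q Cq; apply: no_q; exists q.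
Qed.

Lemma lipschitz_sup_lip_quotients x y : C x -> C y ->
  `|f y - f x| <= sup (lip_quotients C f) * Defs.edist x y.
Proof.
move=> Cx Cy; have [<-|xy] := pselect (x = y).
  by rewrite subrr normr0 edistxx mulr0.
rewrite -ler_pdivrMr ?edist_gt0 //.
by apply: ub_le_sup => //; exists x, y.
Qed.

End LipschitzConstant.

Section GranularSieving.
Context {R : realType} {n : nat} {C : set 'rV[R]_n} {f : 'rV[R]_n -> R}.
Context {M : R} {Cs : nat -> set 'rV[R]_n} {lk : nat -> nat}.
Context {P : nat -> nat -> set 'rV[R]_n} {c : nat -> nat -> 'rV[R]_n}.
Hypothesis grs : GrS_sequence C f M Cs lk P c.

Local Notation delta := (grs_delta lk P).
Local Notation v_ := (grs_v f lk c).

Let Cs0 : Cs 0%N = C.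
Proof. by case: grs. Qed.

Let Cs_pieces k : Cs k = \bigcup_(l in [set l | (l < lk k)%N]) P k l.
Proof. by case: grs => _ [+ _]; apply. Qed.

Let compact_piece {k l} : (l < lk k)%N -> compact (P k l).
Proof. by case: grs => _ [_ [+ _]]; apply. Qed.

Let center_in_piece {k l} : (l < lk k)%N -> P k l (c k l).
Proof. by case: grs => _ [_ [_ [+ _]]]; apply. Qed.

Let CsS k : Cs k.+1 = \bigcup_(l in [set l | (l < lk k)%N /\
                 f (c k l) <= v_ k + delta k * M]) P k l.
Proof. by case: grs => _ [_ [_ [_ [_ +]]]]; apply. Qed.

Lemma grs_piece_sub {k l} : (l < lk k)%N -> P k l `<=` Cs k.
Proof. by move=> lk_l x Px; rewrite Cs_pieces; exists l. Qed.

Lemma grs_sub {k} : Cs k `<=` C.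
Proof.
elim: k => [|k IHk] x; first by rewrite Cs0.
by rewrite CsS => -[l [lk_l _] Px]; apply: IHk; apply: (grs_piece_sub lk_l).
Qed.

Lemma grs_center_in {k l} : (l < lk k)%N -> C (c k l).
Proof.
move=> lk_l; apply: (@grs_sub k); apply: (grs_piece_sub lk_l).
exact: center_in_piece.
Qed.

Lemma grs_edist_le_delta {k l a b} : (l < lk k)%N ->
  P k l a -> P k l b -> Defs.edist a b <= delta k.
Proof.
move=> lk_l Pa Pb; apply: le_trans (edist_le_diam (compact_piece lk_l) Pa Pb) _.
exact: (le_bigmax _ (fun l : 'I_(lk k) => diam (P k l)) (Ordinal lk_l)).
Qed.

Lemma grs_v_le {k l} : (l < lk k)%N -> v_ k <= f (c k l).
Proof.
by move=> lk_l; exact: (bigmin_le _ (Ordinal lk_l) (fun l : 'I_(lk k) => f (c k l))).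
Qed.

Context {x0 : 'rV[R]_n}.
Hypothesis C_x0 : C x0.
Hypothesis x0_min : forall x, C x -> f x0 <= f x.

Lemma minimum_le_grs_v {k} : (0 < lk k)%N -> f x0 <= v_ k.
Proof.
by move=> lk_gt0; apply: le_bigmin => [|l _]; exact/x0_min/grs_center_in.
Qed.

Hypothesis M_ge0 : 0 <= M.
Hypothesis f_lip : forall x y, C x -> C y -> `|f y - f x| <= M * Defs.edist x y.

Lemma grs_piece_value_le {k l x y} : (l < lk k)%N -> P k l x -> P k l y ->
  f y <= f x + M * delta k.
Proof.
move=> lk_l Px Py.
have Cx := grs_sub _ (grs_piece_sub lk_l _ Px).
have Cy := grs_sub _ (grs_piece_sub lk_l _ Py).
have := ler_wpM2l M_ge0 (grs_edist_le_delta lk_l Px Py).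
have := f_lip _ _ Cx Cy; have := ler_norm (f y - f x); lra.
Qed.

Lemma grs_minimizer_in k : Cs k x0.
Proof.
elim: k => [|k]; first by rewrite Cs0.
rewrite Cs_pieces CsS => -[l lk_l Px0]; exists l => //; split => //.
have := grs_piece_value_le lk_l Px0 (center_in_piece lk_l).
have := minimum_le_grs_v (leq_ltn_trans (leq0n l) lk_l).
rewrite [_ * M]mulrC; lra.
Qed.

Lemma grs_value_le k x : Cs k.+1 x -> f x <= f x0 + 3 * M * delta k.
Proof.
rewrite CsS => -[l [lk_l good_l] Px].
have := grs_minimizer_in k; rewrite Cs_pieces => -[l0 lk_l0 Px0].
have := grs_piece_value_le lk_l (center_in_piece lk_l) Px.
have := grs_piece_value_le lk_l0 Px0 (center_in_piece lk_l0).
have := grs_v_le lk_l0.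
rewrite [_ * M]mulrC in good_l; lra.
Qed.

Hypothesis delta_cvg0 : delta @ \oo --> (0 : R).

Lemma grs_limit_value x : (\bigcap_k Cs k) x -> f x = f x0.
Proof.
move=> Cs_x; have Cx : C x := @grs_sub 0%N x (Cs_x 0%N I).
apply/eqP; rewrite eq_le x0_min // andbT.
have bound_cvg : (fun k => f x0 + 3 * M * delta k) @ \oo --> f x0.
  rewrite -[X in _ --> X]addr0 -(mulr0 (3 * M)).
  exact: cvgD (cvg_cst _) (cvgM (cvg_cst _) delta_cvg0).
apply: cvgr_to_ge bound_cvg _; near=> k.
by apply: grs_value_le; apply: Cs_x.
Unshelve. all: by end_near.
Qed.

End GranularSieving.

Theorem theorem1 (R : realType) (n : nat) (C : set 'rV[R]_n) (f : 'rV[R]_n -> R)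
  (M0 v : R) (Cs : nat -> set 'rV[R]_n) (lk : nat -> nat)
  (P : nat -> nat -> set 'rV[R]_n) (c : nat -> nat -> 'rV[R]_n) :
  C !=set0 -> compact C -> path_connected_set C ->
  {within C, continuous f} ->
  has_ubound (lip_quotients C f) ->
  M0 = sup (lip_quotients C f) ->
  (exists2 x0, C x0 & f x0 = v) -> (forall x, C x -> v <= f x) ->
  GrS_sequence C f M0 Cs lk P c ->
  grs_delta lk P @ \oo --> (0 : R) ->
  (\bigcap_k Cs k) !=set0 /\ f @` (\bigcap_k Cs k) = [set v].
Proof.
move=> _ _ _ _ lip_bnd -> [x0 C_x0 <-] x0_min grs delta_cvg0.
have M_ge0 := sup_lip_quotients_ge0 lip_bnd.
have f_lip := lipschitz_sup_lip_quotients lip_bnd.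
have x0_in : (\bigcap_k Cs k) x0.
  by move=> k _; exact: (grs_minimizer_in grs C_x0 x0_min M_ge0 f_lip k).
split; first by exists x0.
apply/seteqP; split=> y /=; last by move=> ->; exists x0.
by case=> x Cs_x <-; exact: (grs_limit_value grs C_x0 x0_min M_ge0 f_lip delta_cvg0 x Cs_x).
Qed.
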